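(* For every $(x_n)\in\ell_1^{*}$ there exists an ideal $I$ on $\mathbb{N}$ with $\mathrm{Fin}\subseteq I$ and $I\neq\mathrm{Fin}$ such that $A_I(x_n)$ is meager and has Lebesgue measure zero.
   Context: $\ell_1^{*}=\{(x_n)\in\ell_1 : x_n\neq 0\text{ for every }n\}$. An ideal on $\mathbb{N}$ is a family $I\subseteq P(\mathbb{N})$ closed under finite unions and subsets with $\mathbb{N}\notin I$; $\mathrm{Fin}$ is the ideal of finite sets. $A_I(x_n)=\{\sum_{n\in A}x_n : A\in I\}$. *)

From Stdlib Require Import Reals Rtopology.
Open Scope R_scope.

(* Subsets of N are represented by their characteristic functions nat -> bool. *)
Definition subsetN (A B : nat -> bool) : Prop := forall n, A n = true -> B n = true.
Definition unionN (A B : nat -> bool) : nat -> bool := fun n => orb (A n) (B n).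

Definition is_ideal (I : (nat -> bool) -> Prop) : Prop :=
  (forall A B, I A -> I B -> I (unionN A B)) /\
  (forall A B, subsetN A B -> I B -> I A) /\
  ~ I (fun _ => true).

Definition Fin (A : nat -> bool) : Prop := exists N, forall n, A n = true -> (n < N)%nat.

Definition ell1_star (x : nat -> R) : Prop :=
  (exists l, infinite_sum (fun n => Rabs (x n)) l) /\ (forall n, x n <> 0).

(* sum_{n in A} x_n (series of x restricted to A). *)
Definition restr (x : nat -> R) (A : nat -> bool) : nat -> R :=
  fun n => if A n then x n else 0.

Definition A_I (I : (nat -> bool) -> Prop) (x : nat -> R) : R -> Prop :=
  fun s => exists A, I A /\ infinite_sum (restr x A) s.

Definition nowhere_dense (F : R -> Prop) : Prop :=
  forall y, ~ interior (adherence F) y.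

Definition meager (S : R -> Prop) : Prop :=
  exists F : nat -> R -> Prop,
    (forall k, nowhere_dense (F k)) /\ (forall y, S y -> exists k, F k y).

Definition null_set (S : R -> Prop) : Prop :=
  forall eps, 0 < eps ->
    exists a b : nat -> R,
      (forall k, a k <= b k) /\
      (forall y, S y -> exists k, a k <= y <= b k) /\
      exists l, infinite_sum (fun k => b k - a k) l /\ l < eps.

From Stdlib Require Import Reals Rtopology Lra Lia List Classical.
Open Scope R_scope.

(* Pick greedily an infinite set E of odd indices so sparse that, for each m in E, the
   terms of x indexed by E beyond m sum to at most 2^-(2^(m+2)+m), and take the ideal of
   sets A with A \ E finite.  If A is contained in E outside [0, k), then for every m in E
   with m >= k its sum lies within 2^-(2^(m+2)+m) of one of the 2^(m+1) subset sums of
   x_0, ..., x_m.  The radius decays so much faster than 2^-m that these finite families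
   of intervals have arbitrarily small total length: each such set of sums is nowhere
   dense, and enumerating all the families at once covers their union by intervals of
   arbitrarily small total length. *)

Lemma Rabs_le_bounds (a b : R) : Rabs a <= b -> - b <= a <= b.
Proof. pose proof (Rle_abs a). pose proof (Rle_abs (- a)). rewrite Rabs_Ropp in *. lra. Qed.

Fixpoint partial_sum (f : nat -> R) (L : nat) : R :=
  match L with O => 0 | S m => partial_sum f m + f m end.

Lemma partial_sum_sum_f_R0 (f : nat -> R) (n : nat) :
  sum_f_R0 f n = partial_sum f (S n).
Proof. induction n as [|n IH]; simpl in *; [lra|]. rewrite IH; simpl; lra. Qed.

Lemma partial_sum_diff_le (f g : nat -> R) (c : R) (a L : nat) :
  (forall n, (a <= n)%nat -> Rabs (f n) <= c * g n) -> (a <= L)%nat ->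
  Rabs (partial_sum f L - partial_sum f a) <= c * (partial_sum g L - partial_sum g a).
Proof.
  intros Hfg HaL. induction HaL as [|L HaL IH]; simpl.
  - rewrite !Rminus_diag, Rabs_R0. lra.
  - specialize (Hfg L HaL).
    replace (partial_sum f L + f L - partial_sum f a)
      with ((partial_sum f L - partial_sum f a) + f L) by ring.
    eapply Rle_trans; [apply Rabs_triang|]. lra.
Qed.

Lemma infinite_sum_dist_le (u : nat -> R) (s p t : R) (M : nat) :
  infinite_sum u s -> (forall L, (M <= L)%nat -> Rabs (partial_sum u L - p) <= t) ->
  Rabs (s - p) <= t.
Proof.
  intros Hs Hbound. apply Rnot_lt_le; intros Hfar.
  destruct (Hs (Rabs (s - p) - t)) as [N HN]; [lra|].
  specialize (HN (N + M)%nat ltac:(lia)). specialize (Hbound (S (N + M)) ltac:(lia)).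
  rewrite partial_sum_sum_f_R0 in HN. unfold Rdist in HN. rewrite Rabs_minus_sym in HN.
  pose proof (Rabs_triang (s - partial_sum u (S (N + M))) (partial_sum u (S (N + M)) - p)).
  replace (s - partial_sum u (S (N + M)) + (partial_sum u (S (N + M)) - p)) with (s - p) in H
    by ring.
  lra.
Qed.

Lemma infinite_sum_scal (f g : nat -> R) (c l : R) :
  (forall n, g n = c * f n) -> infinite_sum f l -> infinite_sum g (c * l).
Proof.
  intros Hg Hf. assert (Hsum : forall n, sum_f_R0 g n = c * sum_f_R0 f n).
  { induction n as [|n IH]; simpl; rewrite Hg; [|rewrite IH]; ring. }
  intros e He. unfold Rdist. setoid_rewrite Hsum.
  apply (CV_mult (fun _ => c) (sum_f_R0 f) c l); [|exact Hf|exact He].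
  intros e' He'. exists O. intros n _. unfold Rdist. rewrite Rminus_diag, Rabs_R0. lra.
Qed.

Lemma pow_half_pos (n : nat) : 0 < (/ 2) ^ n.
Proof. apply pow_lt. lra. Qed.

Lemma pow_half_le (m n : nat) : (m <= n)%nat -> (/ 2) ^ n <= (/ 2) ^ m.
Proof.
  intros Hmn. induction Hmn as [|n _ IH]; [lra|].
  simpl. pose proof (pow_half_pos n). lra.
Qed.

Lemma pow_half_small (e : R) : 0 < e -> exists M, forall m, (M <= m)%nat -> (/ 2) ^ m < e.
Proof.
  intros He. destruct (pow_lt_1_zero (/ 2) ltac:(rewrite Rabs_pos_eq; lra) e He) as [M HM].
  exists M. intros m Hm. specialize (HM m Hm). rewrite Rabs_pos_eq in HM; [exact HM|].
  left; apply pow_half_pos.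
Qed.

Lemma summable_term_small (x : nat -> R) (l : R) :
  infinite_sum (fun n => Rabs (x n)) l ->
  forall e, 0 < e -> exists n0, forall n, (n0 <= n)%nat -> Rabs (x n) < e.
Proof.
  intros Hl e He. destruct (Hl (e / 2)) as [N HN]; [lra|].
  exists (S N). intros [|n] Hn; [lia|].
  pose proof (HN n ltac:(lia)) as Hn0. pose proof (HN (S n) ltac:(lia)) as Hn1.
  unfold Rdist in *. simpl sum_f_R0 in Hn1.
  apply Rabs_def2 in Hn0. apply Rabs_def2 in Hn1. lra.
Qed.

(* Pigeonhole: a ball of radius [rho] contains at most one of the points, so the choice of
   a covering centre is injective. *)
Lemma separated_cover_length (l : list R) (rho : R) (p : nat -> R) (n : nat) :
  (forall k, (k < n)%nat -> exists c, In c l /\ Rabs (p k - c) <= rho) ->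
  (forall i j, (i < n)%nat -> (j < n)%nat -> i <> j -> 2 * rho < Rabs (p i - p j)) ->
  (n <= length l)%nat.
Proof.
  intros Hcov Hsep.
  set (near y c := if Rle_dec (Rabs (y - c)) rho then true else false).
  set (g k := match find (near (p k)) l with Some c => c | None => 0 end).
  assert (Hg : forall k, (k < n)%nat -> In (g k) l /\ Rabs (p k - g k) <= rho).
  { intros k Hk. unfold g. destruct (find (near (p k)) l) as [c|] eqn:Hfind.
    - apply find_some in Hfind as [Hc Hnear]. unfold near in Hnear.
      destruct (Rle_dec _ _); [auto|discriminate].
    - destruct (Hcov k Hk) as [c [Hc Hpc]].
      pose proof (find_none _ _ Hfind c Hc) as Hfar. unfold near in Hfar.
      destruct (Rle_dec _ _); [discriminate|contradiction]. }
  assert (Hinj : NoDup (map g (seq 0 n))).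
  { apply NoDup_map_NoDup_ForallPairs; [|apply seq_NoDup].
    intros i j Hi Hj Hgij. apply in_seq in Hi, Hj.
    destruct (Nat.eq_dec i j) as [|Hij]; [assumption|exfalso].
    destruct (Hg i ltac:(lia)) as [_ Hgi]. destruct (Hg j ltac:(lia)) as [_ Hgj].
    specialize (Hsep i j ltac:(lia) ltac:(lia) Hij). rewrite Hgij in Hgi.
    pose proof (Rabs_triang (p i - g j) (g j - p j)).
    rewrite Rabs_minus_sym in Hgj. replace (p i - g j + (g j - p j)) with (p i - p j) in H
      by ring.
    lra. }
  apply NoDup_incl_length with (l' := l) in Hinj.
  - rewrite length_map, length_seq in Hinj. exact Hinj.
  - intros c Hc. apply in_map_iff in Hc as [k [<- Hk]]. apply in_seq in Hk.
    apply Hg. lia.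
Qed.

(* Otherwise [length l + 1] equally spaced points of [u, v] would be more than [2 rho] apart. *)
Lemma cover_length_le (l : list R) (rho u v : R) :
  u <= v -> (forall y, u <= y <= v -> exists c, In c l /\ Rabs (y - c) <= rho) ->
  v - u <= 2 * rho * INR (length l).
Proof.
  intros Huv Hcov. apply Rnot_lt_le; intros Hlong.
  set (N := length l) in Hlong.
  destruct (Hcov u ltac:(lra)) as [c0 [Hc0 Hrho]].
  pose proof (Rabs_pos (u - c0)).
  assert (HN : (0 < N)%nat) by (unfold N; destruct l; [contradiction|simpl; lia]).
  apply lt_0_INR in HN.
  set (step := (v - u) / INR N).
  assert (Hstep : INR N * step = v - u) by (unfold step; field; lra).
  assert (Hfar : 2 * rho < step) by nra.
  assert (HSN : (S N <= N)%nat); [|lia].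
  apply separated_cover_length with (rho := rho) (p := fun k => u + INR k * step).
  - intros k Hk. apply Hcov.
    assert (INR k <= INR N) by (apply le_INR; lia). pose proof (pos_INR k). nra.
  - intros i j _ _ Hij. replace (u + INR i * step - (u + INR j * step))
      with ((INR i - INR j) * step) by ring.
    rewrite Rabs_mult, (Rabs_pos_eq step) by lra.
    assert (1 <= Rabs (INR i - INR j)).
    { destruct (Nat.lt_gt_cases i j) as [[Hlt|Hgt] _]; [exact Hij|..].
      - rewrite Rabs_minus_sym, Rabs_pos_eq; rewrite <- minus_INR by lia.
        + replace 1 with (INR 1) by reflexivity. apply le_INR. lia.
        + apply pos_INR.
      - rewrite Rabs_pos_eq; rewrite <- minus_INR by lia.
        + replace 1 with (INR 1) by reflexivity. apply le_INR. lia.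
        + apply pos_INR. }
    nra.
Qed.

Definition jordan_null (S : R -> Prop) : Prop :=
  forall e, 0 < e -> exists (l : list R) (rho : R),
    2 * rho * INR (length l) < e /\ forall y, S y -> exists c, In c l /\ Rabs (y - c) <= rho.

Lemma jordan_null_nowhere_dense (S : R -> Prop) : jordan_null S -> nowhere_dense S.
Proof.
  intros HS y [r Hr]. pose proof (cond_pos r) as Hr0.
  destruct (HS (r / 2) ltac:(lra)) as [l [rho [Hsmall Hcover]]].
  pose proof (pos_INR (length l)) as HN.
  set (eta := r / (8 * (INR (length l) + 1))).
  assert (Heta : 0 < eta) by (unfold eta; apply Rdiv_lt_0_compat; lra).
  assert (Hlen : (y + r / 2) - (y - r / 2) <= 2 * (rho + eta) * INR (length l)).
  { apply cover_length_le; [lra|]. intros z Hz.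
    assert (Hzy : adherence S z) by (apply Hr; unfold disc; apply Rabs_def1; lra).
    destruct (Hzy (disc z (mkposreal eta Heta))) as [w [Hw HSw]].
    { exists (mkposreal eta Heta). intros q Hq. exact Hq. }
    destruct (Hcover w HSw) as [c [Hc Hwc]].
    exists c. split; [exact Hc|].
    unfold disc in Hw; simpl in Hw. apply Rabs_def2 in Hw. apply Rabs_le_bounds in Hwc.
    apply Rabs_le. lra. }
  assert (2 * eta * INR (length l) < r / 2).
  { unfold eta. apply Rmult_lt_reg_r with (8 * (INR (length l) + 1)); [lra|].
    field_simplify; nra. }
  lra.
Qed.

(* The [j]-th point of [P m] gets index [2 ^ m + j] in a single enumeration, and the
   interval of index [n] has radius [e / 2 ^ n]. *)
Lemma null_set_of_dyadic_approx (P : nat -> list R) (D : R -> Prop) :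
  (forall m, (length (P m) <= 2 ^ m)%nat) ->
  (forall y, D y -> forall e, 0 < e ->
     exists m v, In v (P m) /\ Rabs (y - v) <= e * (/ 2) ^ (2 ^ S m)%nat) ->
  null_set D.
Proof.
  intros Hlen Happrox eps Heps. set (e := eps / 8).
  set (centre n := nth (n - 2 ^ Nat.log2 n) (P (Nat.log2 n)) 0).
  exists (fun n => centre n - e * (/ 2) ^ n), (fun n => centre n + e * (/ 2) ^ n).
  split; [|split].
  - intros n. pose proof (pow_half_pos n). unfold e. nra.
  - intros y Hy. destruct (Happrox y Hy e ltac:(unfold e; lra)) as [m [v [Hv Hyv]]].
    destruct (In_nth _ _ 0 Hv) as [j [Hj <-]]. specialize (Hlen m).
    exists (2 ^ m + j)%nat.
    assert (Hlog : Nat.log2 (2 ^ m + j) = m) by (apply Nat.log2_unique' with j; lia).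
    unfold centre. rewrite Hlog. replace (2 ^ m + j - 2 ^ m)%nat with j by lia.
    assert (Hj' : (2 ^ m + j <= 2 ^ S m)%nat) by (simpl; lia).
    pose proof (pow_half_le _ _ Hj'). apply Rabs_le_bounds in Hyv.
    assert (e * (/ 2) ^ 2 ^ S m <= e * (/ 2) ^ (2 ^ m + j))
      by (apply Rmult_le_compat_l; unfold e; lra).
    lra.
  - exists (2 * e * / (1 - / 2)). split.
    + apply infinite_sum_scal with (f := fun n => 1 * (/ 2) ^ n); [intros n; ring|].
      apply GP_infinite. rewrite Rabs_pos_eq; lra.
    + replace (/ (1 - / 2)) with 2 by field. unfold e. lra.
Qed.

Definition subset_above (E : nat -> bool) (k : nat) (A : nat -> bool) : Prop :=
  forall n, A n = true -> (n < k)%nat \/ E n = true.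

Definition almost_subset (E : nat -> bool) (A : nat -> bool) : Prop :=
  exists k, subset_above E k A.

Lemma almost_subset_ideal (E : nat -> bool) :
  (forall k, exists n, (k <= n)%nat /\ E n = false) -> is_ideal (almost_subset E).
Proof.
  intros Hcoinf. split; [|split].
  - intros A B [k HA] [k' HB]. exists (Nat.max k k'). intros n Hn.
    apply Bool.orb_true_iff in Hn as [Hn|Hn].
    + destruct (HA n Hn); [left; lia|auto].
    + destruct (HB n Hn); [left; lia|auto].
  - intros A B HAB [k HB]. exists k. intros n Hn. auto.
  - intros [k Hall]. destruct (Hcoinf k) as [n [Hkn HEn]].
    destruct (Hall n eq_refl) as [Hn|Hn]; [lia|congruence].
Qed.

Lemma Fin_almost_subset (E A : nat -> bool) : Fin A -> almost_subset E A.
Proof. intros [k Hk]. exists k. intros n Hn. left. auto. Qed.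

Lemma almost_subset_not_Fin (E : nat -> bool) :
  (forall k, exists n, (k <= n)%nat /\ E n = true) ->
  ~ (forall A, almost_subset E A <-> Fin A).
Proof.
  intros Hinf Heq. destruct (proj1 (Heq E) (ex_intro _ O (fun n Hn => or_intror Hn)))
    as [k Hk].
  destruct (Hinf k) as [n [Hkn HEn]]. specialize (Hk n HEn). lia.
Qed.

Lemma null_set_mono (S T : R -> Prop) :
  (forall y, S y -> T y) -> null_set T -> null_set S.
Proof.
  intros HST HT eps Heps. destruct (HT eps Heps) as [a [b [Hab [Hcov Hlen]]]].
  exists a, b. split; [exact Hab|]. split; [|exact Hlen]. auto.
Qed.

Section Greedy.

Variable x : nat -> R.

Definition exponent (l : nat) : nat := 2 ^ S (S l) + l + 1.

Definition tail_radius (m : nat) : R := (/ 2) ^ m * (/ 2) ^ (2 ^ S (S m)).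

Lemma tail_radius_exponent (m : nat) : 2 * (/ 2) ^ exponent m = tail_radius m.
Proof. unfold tail_radius, exponent. rewrite !pow_add. simpl. field. Qed.

Definition admissible (n l c : nat) : bool :=
  Nat.odd n && (if Rle_dec (Rabs (x n)) ((/ 2) ^ (exponent l + c)) then true else false).

(* [greedy_state n] is the pair (largest element of E below n, or 0; number of elements
   of E below n), and [picked] is the indicator function of E. *)
Fixpoint greedy_state (n : nat) : nat * nat :=
  match n with
  | O => (O, O)
  | S m => let p := greedy_state m in
           if admissible m (fst p) (snd p) then (m, S (snd p)) else p
  end.

Definition last_pick (n : nat) : nat := fst (greedy_state n).
Definition pick_count (n : nat) : nat := snd (greedy_state n).
Definition picked (n : nat) : bool := admissible n (last_pick n) (pick_count n).

Lemma picked_bound (n : nat) :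
  picked n = true -> Rabs (x n) <= (/ 2) ^ (exponent (last_pick n) + pick_count n).
Proof.
  unfold picked, admissible. destruct (Rle_dec _ _); [auto|].
  rewrite Bool.andb_false_r. discriminate.
Qed.

Lemma picked_odd (n : nat) : picked n = true -> Nat.odd n = true.
Proof. unfold picked, admissible. destruct (Nat.odd n); auto. Qed.

Lemma greedy_state_S (n : nat) :
  greedy_state (S n) = if picked n then (n, S (pick_count n)) else greedy_state n.
Proof. unfold picked, last_pick, pick_count. simpl. destruct (admissible _ _ _); auto. Qed.

Lemma last_pick_ge (m n : nat) : picked m = true -> (S m <= n)%nat -> (m <= last_pick n)%nat.
Proof.
  intros Hm Hmn. unfold last_pick.
  induction Hmn as [|n Hmn IH]; rewrite greedy_state_S; [rewrite Hm; auto|].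
  destruct (picked n); simpl; lia.
Qed.

Definition weight (n : nat) : R := if picked n then (/ 2) ^ pick_count n else 0.

Lemma partial_sum_weight (L : nat) : partial_sum weight L = 2 - 2 * (/ 2) ^ pick_count L.
Proof.
  induction L as [|L IH]; [simpl; lra|].
  simpl. rewrite IH. unfold weight. unfold pick_count in *. rewrite greedy_state_S.
  destruct (picked L); simpl; unfold pick_count; lra.

Qed.

Lemma restr_tail_le (A : nat -> bool) (k m L : nat) :
  subset_above picked k A -> (k <= S m)%nat -> picked m = true -> (S m <= L)%nat ->
  Rabs (partial_sum (restr x A) L - partial_sum (restr x A) (S m)) <= tail_radius m.
Proof.
  intros HA Hk Hm HL. rewrite <- tail_radius_exponent.
  eapply Rle_trans; [apply partial_sum_diff_le with (g := weight); [|exact HL]|].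
  - intros n Hn. unfold restr, weight.
    pose proof (pow_half_pos (pick_count n)). pose proof (pow_half_pos (exponent m)).
    destruct (A n) eqn:HAn.
    + destruct (HA n HAn) as [Hnk|Hpn]; [lia|]. rewrite Hpn.
      eapply Rle_trans; [apply picked_bound, Hpn|]. rewrite pow_add.
      apply Rmult_le_compat_r; [lra|]. apply (pow_half_le (exponent m)).
      assert (Hml : (m <= last_pick n)%nat) by (apply last_pick_ge; auto).
      unfold exponent. apply Nat.add_le_mono; [|lia].
      apply Nat.add_le_mono; [apply Nat.pow_le_mono_r|]; lia.
    + rewrite Rabs_R0. destruct (picked n); [|lra]. apply Rmult_le_pos; lra.
  - rewrite !partial_sum_weight. pose proof (pow_half_pos (exponent m)).
    pose proof (pow_half_pos (pick_count L)). pose proof (pow_half_pos (pick_count (S m))).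
    pose proof (pow_half_le 0 (pick_count (S m)) (Nat.le_0_l _)). simpl pow in *. nra.
Qed.

Lemma restr_sum_near (A : nat -> bool) (k m : nat) (s : R) :
  subset_above picked k A -> (k <= S m)%nat -> picked m = true ->
  infinite_sum (restr x A) s -> Rabs (s - partial_sum (restr x A) (S m)) <= tail_radius m.
Proof. intros. eapply infinite_sum_dist_le; [eassumption|]. intros. eapply restr_tail_le; eauto. Qed.

Fixpoint subset_sums (M : nat) : list R :=
  match M with
  | O => 0 :: nil
  | S m => subset_sums m ++ map (fun v => v + x m) (subset_sums m)
  end.

Lemma length_subset_sums (M : nat) : length (subset_sums M) = (2 ^ M)%nat.
Proof.
  induction M as [|M IH]; [reflexivity|].
  simpl. rewrite length_app, length_map, IH. lia.
Qed.

Lemma partial_sum_restr_in (A : nat -> bool) (M : nat) :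
  In (partial_sum (restr x A) M) (subset_sums M).
Proof.
  induction M as [|M IH]; [simpl; auto|].
  simpl. apply in_or_app. change (restr x A M) with (if A M then x M else 0).
  destruct (A M).
  - right. apply in_map_iff. exists (partial_sum (restr x A) M). auto.
  - left. rewrite Rplus_0_r. exact IH.
Qed.

Definition sums_above (k : nat) (s : R) : Prop :=
  exists A, subset_above picked k A /\ infinite_sum (restr x A) s.

Lemma sums_above_near (k m : nat) (s : R) :
  sums_above k s -> (k <= S m)%nat -> picked m = true ->
  exists v, In v (subset_sums (S m)) /\ Rabs (s - v) <= tail_radius m.
Proof.
  intros [A [HA Hs]] Hk Hm. exists (partial_sum (restr x A) (S m)).
  split; [apply partial_sum_restr_in|]. eapply restr_sum_near; eauto.
Qed.

Lemma picked_coinfinite (k : nat) : exists n, (k <= n)%nat /\ picked n = false.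
Proof.
  exists (2 * k)%nat. split; [lia|]. destruct (picked (2 * k)) eqn:Hp; [|reflexivity].
  apply picked_odd in Hp. rewrite Nat.odd_mul in Hp. discriminate.
Qed.

Lemma tail_radius_count (m : nat) : 2 ^ S m * tail_radius m <= 2 * (/ 2) ^ m.
Proof.
  unfold tail_radius. assert (Hm : (m <= 2 ^ S (S m))%nat).
  { pose proof (Nat.pow_gt_lin_r 2 (S (S m)) ltac:(lia)). lia. }
  pose proof (pow_half_le _ _ Hm). pose proof (pow_half_pos m).
  assert (Hinv : 2 ^ m * (/ 2) ^ m = 1)
    by (rewrite <- Rpow_mult_distr, Rinv_r, pow1; lra).
  replace (2 ^ S m * ((/ 2) ^ m * (/ 2) ^ 2 ^ S (S m)))
    with (2 * (2 ^ m * (/ 2) ^ m) * (/ 2) ^ 2 ^ S (S m)) by (simpl; ring).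
  rewrite Hinv. lra.
Qed.

Hypothesis hx : ell1_star x.

Lemma picked_infinite (k : nat) : exists n, (k <= n)%nat /\ picked n = true.
Proof.
  apply NNPP. intros Hnone.
  assert (Hskip : forall n, (k <= n)%nat -> picked n = false).
  { intros n Hn. destruct (picked n) eqn:Hp; [|reflexivity]. exfalso. eauto. }
  assert (Hfrozen : forall n, (k <= n)%nat -> greedy_state n = greedy_state k).
  { intros n Hn. induction Hn as [|n Hn IH]; [reflexivity|].
    rewrite greedy_state_S, Hskip; auto. }
  destruct hx as [[l Hl] _].
  destruct (summable_term_small x l Hl _ (pow_half_pos (exponent (last_pick k) + pick_count k)))
    as [n0 Hn0].
  set (n := (2 * (k + n0) + 1)%nat).
  assert (Hpn : picked n = true).
  { unfold picked, admissible, last_pick, pick_count. rewrite (Hfrozen n) by lia.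
    replace (Nat.odd n) with true
      by (unfold n; rewrite Nat.add_comm, Nat.odd_add_mul_2; reflexivity).
    destruct (Rle_dec _ _) as [|Hfar]; [reflexivity|].
    exfalso. apply Hfar. left. apply Hn0. lia. }
  rewrite Hskip in Hpn by lia. discriminate.
Qed.

Lemma picked_small (k : nat) (e : R) :
  0 < e -> exists m, (k <= S m)%nat /\ picked m = true /\ (/ 2) ^ m < e.
Proof.
  intros He. destruct (pow_half_small e He) as [M HM].
  destruct (picked_infinite (Nat.max k M)) as [m [Hm Hpm]].
  exists m. split; [lia|]. split; [exact Hpm|]. apply HM. lia.
Qed.

Lemma sums_above_jordan_null (k : nat) : jordan_null (sums_above k).
Proof.
  intros e He. destruct (picked_small k (e / 4) ltac:(lra)) as [m [Hk [Hm Hsmall]]].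
  exists (subset_sums (S m)), (tail_radius m). split.
  - rewrite length_subset_sums, pow_INR. simpl INR.
    replace (1 + 1) with 2 by ring. pose proof (tail_radius_count m). lra.
  - intros y Hy. eapply sums_above_near; eauto.
Qed.

Lemma sums_above_null : null_set (fun s => exists k, sums_above k s).
Proof.
  apply null_set_of_dyadic_approx with (P := subset_sums).
  - intros m. rewrite length_subset_sums. lia.
  - intros y [k Hy] e He. destruct (picked_small k e He) as [m [Hk [Hm Hsmall]]].
    destruct (sums_above_near k m y Hy Hk Hm) as [v [Hv Hyv]].
    exists (S m), v. split; [exact Hv|]. eapply Rle_trans; [exact Hyv|].
    unfold tail_radius. apply Rmult_le_compat_r; [left; apply pow_half_pos|lra].
Qed.

End Greedy.

Theorem mainTheorem11 (x : nat -> R) (hx : ell1_star x) :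
  exists I : (nat -> bool) -> Prop,
    is_ideal I /\
    (forall A, Fin A -> I A) /\
    ~ (forall A, I A <-> Fin A) /\
    meager (A_I I x) /\ null_set (A_I I x).
Proof.
  exists (almost_subset (picked x)).
  assert (Hsums : forall s, A_I (almost_subset (picked x)) x s -> exists k, sums_above x k s)
    by (intros s [A [[k HA] Hs]]; exists k, A; auto).
  split; [exact (almost_subset_ideal _ (picked_coinfinite x))|].
  split; [exact (Fin_almost_subset _)|].
  split; [exact (almost_subset_not_Fin _ (picked_infinite x hx))|].
  split.
  - exists (sums_above x). split; [|exact Hsums].
    intros k. apply jordan_null_nowhere_dense, sums_above_jordan_null, hx.
  - exact (null_set_mono _ _ Hsums (sums_above_null x hx)).
Qed.
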